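(* Let $\alpha,\beta,\sigma>0$ and let $X\sim\mathcal{N}(\alpha,\sigma^2)$. Then $$\mathbb{E}\left[\tanh\left(\frac{\beta X}{\sigma^2}\right)\right]\ge 1-\exp\left(-\frac{\min(\alpha,\beta)\cdot\alpha}{2\sigma^2}\right).$$ *)

From HB Require Import structures.
From mathcomp Require Import all_boot all_order all_algebra.
From mathcomp Require Import all_classical all_reals all_analysis.
Set Implicit Arguments. Unset Strict Implicit. Unset Printing Implicit Defensive.
Import Order.TTheory GRing.Theory Num.Theory.
Local Open Scope ring_scope.

Definition tanh {R : realType} (x : R) : R :=
  (expR x - expR (- x)) / (expR x + expR (- x)).

From mathcomp Require Import all_boot all_order all_algebra.
From mathcomp Require Import all_classical all_reals all_analysis.
From mathcomp Require Import measurable_realfun ring lra.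
Import Order.TTheory GRing.Theory Num.Theory.
Import numFieldNormedType.Exports.
Local Open Scope ring_scope.

(* Write tanh y = 1 - g y with g y = 2 / (1 + e^(2y)) and c = beta / sigma^2,
   so that the claim reads E[g (c X)] <= exp (- min(alpha, beta) alpha / (2 sigma^2)).
   Since g y <= e^(-y), E[g (c X)] is at most the moment generating function
   E[e^(-c X)] = exp (- c alpha + c^2 sigma^2 / 2), which suffices when beta <= alpha.
   When alpha < beta, pair x with -x: the density satisfies p(-x) = e^(-2 a x) p(x)
   for a = alpha / sigma^2, and g y + g (-y) e^(-2z) <= 2 e^(-z) for 0 <= z <= 2y,
   which bounds E[g (c X)] by E[e^(-a X)] = exp (- alpha^2 / (2 sigma^2)). *)

Section tanh_gap.
Context {R : realType}.
Implicit Types y z : R.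

Definition tanh_gap y : R := 1 - tanh y.

Lemma tanh_gapE y : tanh_gap y = 2 / (1 + expR (2 * y)).
Proof.
have ey0 : expR y != 0 by rewrite gt_eqF ?expR_gt0.
have den0 : 1 + expR y ^+ 2 != 0 by rewrite gt_eqF // ltr_wpDr ?exprn_ge0 ?expR_ge0.
rewrite /tanh_gap /tanh expRN expRM_natl; field.
by rewrite den0 ey0.
Qed.

Lemma tanh_gap_ge0 y : 0 <= tanh_gap y.
Proof. by rewrite tanh_gapE divr_ge0 // addr_ge0 ?expR_ge0. Qed.

Lemma tanh_gap_le2 y : tanh_gap y <= 2.
Proof.
by rewrite tanh_gapE ler_pdivrMr ?ler_peMr ?lerDl ?expR_ge0 // ltr_wpDr ?expR_gt0.
Qed.

Lemma continuous_tanh_gap : continuous tanh_gap.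
Proof.
move=> y; rewrite (_ : tanh_gap = fun y => 2 * (1 + expR (2 * y))^-1); last first.
  by apply/funext => ?; rewrite tanh_gapE.
apply: cvgM; first exact: cvg_cst.
apply: cvgV; first by rewrite gt_eqF // ltr_wpDr ?expR_gt0.
apply: cvgD; first exact: cvg_cst.
apply: (cvg_comp _ expR); last exact: continuous_expR.
by apply: cvgM; [exact: cvg_cst | exact: cvg_id].
Qed.

Lemma measurable_tanh_gap : measurable_fun [set: R] tanh_gap.
Proof. exact: continuous_measurable_fun continuous_tanh_gap. Qed.

Lemma tanh_gap_le_expRN y : tanh_gap y <= expR (- y).
Proof.
rewrite tanh_gapE expRN expRM_natl ler_pdivrMr ?ltr_wpDr ?exprn_gt0 ?expR_gt0 //.
rewrite mulrC ler_pdivlMr ?expR_gt0 // -subr_ge0.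
by rewrite (_ : _ - _ = (expR y - 1) ^+ 2) ?sqr_ge0 //; ring.
Qed.

Lemma tanh_gap_pair_le y z : 0 <= z -> z <= 2 * y ->
  tanh_gap y + tanh_gap (- y) * expR (- (2 * z)) <= 2 * expR (- z).
Proof.
move=> z0 zy; rewrite !tanh_gapE -subr_ge0.
rewrite mulrN (expRN (2 * y)) (_ : expR (- (2 * z)) = expR (- z) ^+ 2); last first.
  by rewrite -expRM_natl mulrN.
have u1 : expR (- z) <= 1 by rewrite expR_le1 oppr_le0.
have uE : 1 <= expR (- z) * expR (2 * y).
  by rewrite -expRD -[leLHS]expR0 ler_expR addrC subr_ge0.
set E := expR (2 * y); set u := expR (- z).
have E0 : 0 < E by exact: expR_gt0.
rewrite (_ : _ - _ = 2 * (1 - u) * (u * E - 1) / (1 + E)).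
  by rewrite !mulr_ge0 ?invr_ge0 ?subr_ge0 // addr_ge0 // ltW.
by field; rewrite !gt_eqF // ?addr_gt0.
Qed.

End tanh_gap.

Section symmetric_integral.
Context {R : realType}.
Local Notation mu := (@lebesgue_measure R).
Local Open Scope classical_set_scope.
Local Open Scope ereal_scope.

Lemma ge0_integral_symmetrize (f : R -> \bar R) :
  measurable_fun [set: R] f -> (forall x, 0 <= f x) ->
  \int[mu]_x f x = \int[mu]_(x in `[0%R, +oo[) (f x + f (- x)%R).
Proof.
move=> mf f0.
have mfN : measurable_fun [set: R] (fun x => f (- x)%R).
  exact: measurableT_comp.
have -> : [set: R] = `]-oo, 0%R] `|` `]0%R, +oo[.
  apply/seteqP; split => x //= _.
  by rewrite !in_itv /= andbT; case: (leP x 0%R) => _; [left|right].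
rewrite ge0_integral_setU //=; last 2 first.
- exact: measurable_funTS.
- apply/disj_setPS => x [] /=; rewrite !in_itv /= andbT => x0 x0'.
  by move: (lt_le_trans x0' x0); rewrite ltxx.
rewrite integral_itv_obnd_cbnd; last exact: measurable_funTS.
have := ge0_integration_by_substitution0 mfN (fun x => f0 _).
under [in X in _ = X -> _]eq_integral do rewrite opprK.
move <-; rewrite addeC ge0_integralD //=.
all: by [move=> x _ | exact: measurable_funTS].
Qed.

Lemma ge0_le_integral_symmetric (f g : R -> \bar R) :
  measurable_fun [set: R] f -> measurable_fun [set: R] g ->
  (forall x, 0 <= f x) -> (forall x, 0 <= g x) ->
  (forall x, (0 <= x)%R -> f x + f (- x)%R <= g x + g (- x)%R) ->
  \int[mu]_x f x <= \int[mu]_x g x.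
Proof.
move=> mf mg f0 g0 fg.
rewrite (ge0_integral_symmetrize _ mf f0) (ge0_integral_symmetrize _ mg g0).
have mN (h : R -> \bar R) : measurable_fun [set: R] h ->
    measurable_fun (`[0%R, +oo[ : set R) (fun x => h x + h (- x)%R).
  move=> mh; apply/measurable_funTS/emeasurable_funD => //.
  exact: measurableT_comp.
apply: ge0_le_integral => //=; [|exact: mN|exact: mN|].
- by move=> x _; rewrite adde_ge0.
by move=> x; rewrite /= in_itv /= andbT; exact: fg.
Qed.

End symmetric_integral.

Section normal_distribution.
Context {R : realType}.
Local Notation mu := (@lebesgue_measure R).
Implicit Types m s t x : R.

Lemma normal_pdfN m s x : s != 0 ->
  normal_pdf m s (- x) = expR (- (2 * (m / s ^+ 2 * x))) * normal_pdf m s x.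
Proof.
move=> s0; rewrite /normal_pdf (negbTE s0) /normal_fun.
by rewrite [RHS]mulrCA -expRD; congr (_ * expR _); rewrite -mulr_natr; field.
Qed.

Lemma normal_pdf_tilt m s t x : s != 0 ->
  expR (t * x) * normal_pdf m s x =
  expR (t * m + t ^+ 2 * s ^+ 2 / 2) * normal_pdf (m + t * s ^+ 2) s x.
Proof.
move=> s0; rewrite /normal_pdf (negbTE s0) /normal_fun.
by rewrite mulrCA [RHS]mulrCA -!expRD; congr (_ * expR _); rewrite -mulr_natr; field.
Qed.

Lemma normal_mgf m s t : s != 0 ->
  (\int[mu]_x (expR (t * x) * normal_pdf m s x)%:E =
   (expR (t * m + t ^+ 2 * s ^+ 2 / 2))%:E)%E.
Proof.
move=> s0; under eq_integral do rewrite normal_pdf_tilt // EFinM.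
rewrite ge0_integralZl //=; first by rewrite integral_normal_pdf mule1.
- apply/measurable_EFinP; exact: measurable_normal_pdf.
- by move=> x _; rewrite lee_fin normal_pdf_ge0.
Qed.

Lemma ge0_integral_normal_prob m s (g : R -> \bar R) :
  (forall x, (0 <= g x)%E) -> measurable_fun [set: R] g ->
  (\int[normal_prob m s]_x g x = \int[mu]_x (g x * (normal_pdf m s x)%:E))%E.
Proof.
move=> g0 mg; have dom := normal_prob_dominates m s.
(* normal_pdf is a Radon-Nikodym derivative of normal_prob, hence a.e. equal to the canonical one *)
rewrite -(Radon_Nikodym_SigmaFinite.change_of_variables dom) //.
apply: ae_eq_integral => //.
- apply: emeasurable_funM => //.
  exact: measurable_int (Radon_Nikodym_SigmaFinite.f_integrable dom).
- apply: emeasurable_funM => //; apply/measurableT_comp => //.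
  exact: measurable_normal_pdf.
apply: ae_eqe_mul2l; apply: integral_ae_eq => //.
- exact: Radon_Nikodym_SigmaFinite.f_integrable.
- by apply/measurableT_comp => //; exact: measurable_normal_pdf.
by move=> E _ mE; rewrite -Radon_Nikodym_SigmaFinite.f_integral.
Qed.

End normal_distribution.

Section normal_tanh_gap.
Context {R : realType}.
Local Notation mu := (@lebesgue_measure R).
Variables (m s : R).
Hypothesis s0 : s != 0.
Implicit Types c x : R.

Local Notation pdf := (normal_pdf m s).

Let measurable_mul_pdf (f : R -> R) c : measurable_fun [set: R] f ->
  measurable_fun [set: R] (fun x => (f (c * x) * pdf x)%:E).
Proof.
move=> mf; apply/measurable_EFinP/measurable_funM; last exact: measurable_normal_pdf.
exact: measurableT_comp mf (measurable_funM _ _).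
Qed.

Lemma normal_tanh_gap_le_mgf c :
  (\int[mu]_x (tanh_gap (c * x) * pdf x)%:E <=
   (expR (- c * m + c ^+ 2 * s ^+ 2 / 2))%:E)%E.
Proof.
rewrite -[c ^+ 2]sqrrN -normal_mgf //; apply: ge0_le_integral => //=.
- by move=> x _; rewrite lee_fin mulr_ge0 ?tanh_gap_ge0 ?normal_pdf_ge0.
- apply: measurable_mul_pdf; exact: measurable_tanh_gap.
- apply: measurable_mul_pdf; exact: measurable_expR.
move=> x _; rewrite lee_fin ler_wpM2r ?normal_pdf_ge0 // mulNr.
exact: tanh_gap_le_expRN.
Qed.

Lemma normal_tanh_gap_le_sqr_mean c : 0 <= m -> m <= 2 * c * s ^+ 2 ->
  (\int[mu]_x (tanh_gap (c * x) * pdf x)%:E <=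
   (expR (- (m ^+ 2 / (2 * s ^+ 2))))%:E)%E.
Proof.
move=> m0 m2c; set a := m / s ^+ 2.
have s2 : 0 < s ^+ 2 by rewrite exprn_even_gt0.
have a0 : 0 <= a by rewrite divr_ge0 // ltW.
have a2c : a <= 2 * c by rewrite ler_pdivrMr.
have -> : - (m ^+ 2 / (2 * s ^+ 2)) = - a * m + (- a) ^+ 2 * s ^+ 2 / 2.
  by rewrite /a; field.
rewrite -normal_mgf //; apply: ge0_le_integral_symmetric.
- apply: measurable_mul_pdf; exact: measurable_tanh_gap.
- apply: measurable_mul_pdf; exact: measurable_expR.
- by move=> x; rewrite lee_fin mulr_ge0 ?tanh_gap_ge0 ?normal_pdf_ge0.
- by move=> x; rewrite lee_fin mulr_ge0 ?expR_ge0 ?normal_pdf_ge0.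
move=> x x0; rewrite -!EFinD lee_fin !normal_pdfN // mulrN mulNr mulrNN.
have ax0 : 0 <= a * x by rewrite mulr_ge0.
have axc : a * x <= 2 * (c * x) by rewrite mulrA ler_wpM2r.
have -> : expR (a * x) * (expR (- (2 * (a * x))) * pdf x) = expR (- (a * x)) * pdf x.
  by rewrite mulrA -expRD; congr (expR _ * _); ring.
rewrite -/a [X in _ + X]mulrA -!mulrDl -mulr2n -[expR _ *+ 2]mulr_natl.
rewrite ler_wpM2r ?normal_pdf_ge0 //.
exact: tanh_gap_pair_le.
Qed.

End normal_tanh_gap.

Lemma integral_tanhE {R : realType} d (T : measurableType d)
    (P : probability T R) (f : T -> R) : measurable_fun [set: T] f ->
  (\int[P]_x (tanh (f x))%:E = 1 - \int[P]_x (tanh_gap (f x))%:E)%E.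
Proof.
move=> mf.
have mg : measurable_fun [set: T] (fun x => tanh_gap (f x)).
  exact: measurableT_comp measurable_tanh_gap mf.
have ig : P.-integrable [set: T] (EFin \o (fun x => tanh_gap (f x))).
  apply: measurable_bounded_integrable => //; first by rewrite ltey_eq fin_num_measure.
  exists 2; split; first exact: num_real.
  move=> M M2 x _ /=; rewrite ger0_norm ?tanh_gap_ge0 //.
  by rewrite (le_trans (tanh_gap_le2 _)) // ltW.
under eq_integral do rewrite -[tanh _](subKr 1) EFinB.
rewrite integralB_EFin //; last exact: finite_measure_integrable_cst.
by rewrite integral_cst //= probability_setT mul1e.
Qed.

Lemma normal_tanh_gap_le {R : realType} (m b s : R) : 0 < m -> 0 < b -> 0 < s ->
  (\int[lebesgue_measure]_x (tanh_gap (b / s ^+ 2 * x) * normal_pdf m s x)%:E <=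
   (expR (- (Num.min m b * m) / (2 * s ^+ 2)))%:E)%E.
Proof.
move=> m0 b0 s0; have sN0 : s != 0 by rewrite gt_eqF.
have [bm|mb] := leP b m.
- apply: le_trans (normal_tanh_gap_le_mgf _ _ sN0 _) _.
  rewrite lee_fin ler_expR -subr_ge0.
  have -> : - (b * m) / (2 * s ^+ 2) -
      (- (b / s ^+ 2) * m + (b / s ^+ 2) ^+ 2 * s ^+ 2 / 2) =
      b * (m - b) / (2 * s ^+ 2) by field.
  by rewrite divr_ge0 ?mulr_ge0 ?subr_ge0 // ltW.
- apply: le_trans (normal_tanh_gap_le_sqr_mean _ _ sN0 _ (ltW m0) _) _.
    by rewrite -mulrA divfK ?sqrf_eq0 //; lra.
  by rewrite lee_fin ler_expR mulNr expr2.
Qed.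

Theorem lemma2 (R : realType) (alpha beta sigma : R)
  (ha : 0 < alpha) (hb : 0 < beta) (hs : 0 < sigma) :
  ((1 - expR (- (Num.min alpha beta * alpha) / (2 * sigma ^+ 2)))%:E
   <= \int[normal_prob alpha sigma]_x (tanh (beta * x / sigma ^+ 2))%:E)%E.
Proof.
under eq_integral do rewrite mulrAC.
rewrite integral_tanhE; last exact: measurable_funM.
rewrite ge0_integral_normal_prob; first last.
- apply/measurable_EFinP; apply: measurableT_comp measurable_tanh_gap _.
  exact: measurable_funM.
- by move=> x; rewrite lee_fin tanh_gap_ge0.
under eq_integral do rewrite -EFinM.
by rewrite EFinB leeB // normal_tanh_gap_le.
Qed.
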